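(* Let $c>0$ be a fixed constant. Let $(u_n)_{n\ge1}$ be a sequence of positive real numbers and let $A,B>0$, $\alpha\in(0,\frac12)$ be such that for all integers $a,b\ge1$, $$u_{a+b}\le(u_a+u_b+A)+(a^{2\alpha}+b^{2\alpha})B^2+(a^\alpha+b^\alpha)B(u_a+u_b+A)^{1/2}+cu_a^{1/2}+cu_b^{1/2}.$$ Then there is a constant $c_\alpha$ depending only on $\alpha$ (and on $c$) such that $u_n\le c_\alpha(1+u_1+A+B^2)\,n$ for all $n\ge1$. *)

From Stdlib Require Export Reals.
Open Scope R_scope.

(* The recursive hypothesis of the theorem, for a sequence u indexed by
   integers >= 1 (the value u 0 is irrelevant). *)
Definition subadd_hyp (c A B alpha : R) (u : nat -> R) : Prop :=
  forall a b : nat, (1 <= a)%nat -> (1 <= b)%nat ->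
    u (a + b)%nat <=
      (u a + u b + A)
      + (Rpower (INR a) (2 * alpha) + Rpower (INR b) (2 * alpha)) * B ^ 2
      + (Rpower (INR a) alpha + Rpower (INR b) alpha) * B * sqrt (u a + u b + A)
      + c * sqrt (u a) + c * sqrt (u b).

From Stdlib Require Import Reals Lra Lia Psatz Wf_nat.
Open Scope R_scope.

(* By strong induction, u_n <= K ((D + 1) n - D n^beta) with K = 1 + u_1 + A + B^2 and
   beta = alpha + 1/2 < 1, splitting n = a + b with a, b <= 3n/4.  The induction
   hypothesis makes every error term of the recursion O(K n^beta), while concavity gives
   a^beta + b^beta >= (3/4)^(beta-1) n^beta with (3/4)^(beta-1) > 1.  The surplus
   D ((3/4)^(beta-1) - 1) K n^beta pays for the errors once D is large, which is
   possible because the errors grow only like sqrt D. *)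

Lemma Rpower_pos (x e : R) : 0 < Rpower x e.
Proof. apply exp_pos. Qed.

Lemma Rpower_1_l (e : R) : Rpower 1 e = 1.
Proof. unfold Rpower; rewrite ln_1, Rmult_0_r; apply exp_0. Qed.

Lemma Rpower_gt_1 (x e : R) : 0 < x < 1 -> e < 0 -> 1 < Rpower x e.
Proof.
  intros Hx He; unfold Rpower; rewrite <- exp_0; apply exp_increasing.
  assert (ln x < ln 1) by (apply ln_increasing; lra).
  rewrite ln_1 in *; nra.
Qed.

Lemma Rle_Rpower_l_nonpos (a b e : R) : e <= 0 -> 0 < a <= b -> Rpower b e <= Rpower a e.
Proof.
  intros He Hab; replace e with (- - e) by ring; rewrite !(Rpower_Ropp _ (- e)).
  apply Rinv_le_contravar; [apply Rpower_pos | apply Rle_Rpower_l; lra].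
Qed.

Lemma Rpower_mul_pred (x e : R) : 0 < x -> Rpower x e = x * Rpower x (e - 1).
Proof.
  intros Hx; rewrite <- (Rpower_1 x) at 2 by exact Hx.
  rewrite <- Rpower_plus; f_equal; ring.
Qed.

Lemma Rpower_ge_scaled (z t N e : R) :
  0 < z -> 0 < t -> z <= t * N -> e <= 1 ->
  z * (Rpower t (e - 1) * Rpower N (e - 1)) <= Rpower z e.
Proof.
  intros Hz Ht HzN He.
  assert (HN : 0 < N) by nra.
  rewrite Rpower_mult_distr, (Rpower_mul_pred z e) by lra.
  apply Rmult_le_compat_l; [lra |].
  apply Rle_Rpower_l_nonpos; lra.
Qed.

Lemma Rpower_add_balanced (x y e : R) :
  0 < x -> 0 < y -> e <= 1 -> 4 * x <= 3 * (x + y) -> 4 * y <= 3 * (x + y) ->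
  Rpower (3 / 4) (e - 1) * Rpower (x + y) e <= Rpower x e + Rpower y e.
Proof.
  intros Hx Hy He Hx4 Hy4.
  pose proof (Rpower_ge_scaled x (3 / 4) (x + y) e Hx ltac:(lra) ltac:(lra) He).
  pose proof (Rpower_ge_scaled y (3 / 4) (x + y) e Hy ltac:(lra) ltac:(lra) He).
  rewrite (Rpower_mul_pred (x + y) e) by lra; nra.
Qed.

(* Completing the square in [sqrt x]. *)
Lemma sqrt_le_affine (x eps : R) : 0 <= x -> 0 < eps -> sqrt x <= eps * x + / (4 * eps).
Proof.
  intros Hx He.
  pose proof (sqrt_sqrt x Hx).
  assert (Hsq : eps * x - sqrt x + / (4 * eps) = eps * (sqrt x - / (2 * eps)) ^ 2).
  { rewrite <- H at 1; field; lra. }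
  assert (0 <= eps * (sqrt x - / (2 * eps)) ^ 2) by (apply Rmult_le_pos; [lra | apply pow2_ge_0]).
  lra.
Qed.

Lemma linear_dominates_sqrt (m k gam : R) :
  0 <= m -> 0 <= k -> 0 < gam ->
  exists D, 0 < D /\ m + k * sqrt (D + 2) <= D * gam.
Proof.
  intros Hm Hk Hg.
  set (eps := gam / (2 * (k + 1))).
  assert (Heps : 0 < eps) by (unfold eps; apply Rdiv_lt_0_compat; lra).
  assert (Hkeps : k * eps <= gam / 2).
  { unfold eps; apply (Rmult_le_reg_r (2 * (k + 1))); [lra |].
    field_simplify; nra. }
  set (r := k / (4 * eps)).
  assert (Hr : 0 <= r) by (apply Rmult_le_pos; [lra | apply Rlt_le, Rinv_0_lt_compat; lra]).
  set (D := 2 * (m + gam + r) / gam).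
  assert (HD : D * gam = 2 * (m + gam + r)) by (unfold D; field; lra).
  assert (HD0 : 0 < D) by (apply Rdiv_lt_0_compat; lra).
  exists D; split; [exact HD0 |].
  pose proof (sqrt_le_affine (D + 2) eps ltac:(lra) Heps) as Hsqrt.
  assert (k * sqrt (D + 2) <= k * eps * (D + 2) + r).
  { unfold r.
    replace (k * eps * (D + 2) + k / (4 * eps)) with (k * (eps * (D + 2) + / (4 * eps)))
      by (field; lra).
    apply Rmult_le_compat_l; assumption. }
  nra.
Qed.

Lemma sqrt_le_mult3 (v K L N : R) :
  0 <= K -> 0 <= L -> v <= K * L * N -> sqrt v <= sqrt K * sqrt L * sqrt N.
Proof.
  intros HK HL Hv.
  rewrite <- !sqrt_mult_alt by (try apply Rmult_le_pos; lra).
  apply sqrt_le_1_alt, Hv.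
Qed.

Lemma cross_error_le (alpha B K L N x y v : R) :
  0 <= alpha -> 1 <= x <= N -> 1 <= y <= N -> 0 <= B -> B ^ 2 <= K -> 0 <= L ->
  v <= K * L * N ->
  (Rpower x alpha + Rpower y alpha) * B * sqrt v
  <= 2 * sqrt L * K * Rpower N (alpha + 1 / 2).
Proof.
  intros Hal Hx Hy HB HBK HL Hv.
  assert (HK : 0 <= K) by nra.
  assert (HBsK : B <= sqrt K) by (rewrite <- (sqrt_pow2 B) by lra; apply sqrt_le_1_alt; lra).
  assert (HsN : Rpower N alpha * sqrt N = Rpower N (alpha + 1 / 2)).
  { rewrite <- Rpower_sqrt, <- Rpower_plus by lra; f_equal; field. }
  pose proof (Rle_Rpower_l x N alpha Hal ltac:(lra));
    pose proof (Rle_Rpower_l y N alpha Hal ltac:(lra)).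
  pose proof (Rpower_pos x alpha); pose proof (Rpower_pos y alpha).
  pose proof (sqrt_pos K); pose proof (sqrt_pos L); pose proof (sqrt_pos N); pose proof (sqrt_pos v).
  apply (Rle_trans _ (2 * Rpower N alpha * sqrt K * (sqrt K * sqrt L * sqrt N))).
  - apply Rmult_le_compat; [nra | lra | apply Rmult_le_compat; lra | apply sqrt_le_mult3; lra].
  - replace (2 * Rpower N alpha * sqrt K * (sqrt K * sqrt L * sqrt N))
      with (2 * (sqrt K * sqrt K) * sqrt L * (Rpower N alpha * sqrt N)) by ring.
    rewrite sqrt_sqrt, HsN by lra; lra.
Qed.

Lemma subadd_error_le (c alpha A B K M x y ua ub : R) :
  0 <= c -> 0 < alpha < 1 / 2 -> 1 <= x -> 1 <= y -> 0 <= ua -> 0 <= ub -> 0 <= M ->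
  ua + ub <= K * M * (x + y) -> 0 <= A <= K -> 0 <= B -> B ^ 2 <= K -> 1 <= K ->
  A + (Rpower x (2 * alpha) + Rpower y (2 * alpha)) * B ^ 2
    + (Rpower x alpha + Rpower y alpha) * B * sqrt (ua + ub + A)
    + c * sqrt ua + c * sqrt ub
  <= K * Rpower (x + y) (alpha + 1 / 2) * (3 + 2 * sqrt (M + 1) + 2 * c * sqrt M).
Proof.
  intros Hc Hal Hx Hy Hua Hub HM Huab HA HB HB2 HK.
  set (N := x + y); set (Q := Rpower N (alpha + 1 / 2)).
  assert (HN : N = x + y) by reflexivity.
  assert (HQ1 : 1 <= Q).
  { unfold Q; rewrite <- (Rpower_O N) at 1 by lra; apply Rle_Rpower; lra. }
  assert (HsN : sqrt N <= Q).
  { unfold Q; rewrite <- Rpower_sqrt by lra; apply Rle_Rpower; lra. }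
  assert (H2a : forall z, 1 <= z <= N -> Rpower z (2 * alpha) <= Q).
  { intros z Hz; apply (Rle_trans _ (Rpower N (2 * alpha))).
    - apply Rle_Rpower_l; lra.
    - apply Rle_Rpower; lra. }
  assert (HsK : sqrt K <= K) by (rewrite <- (sqrt_square K) at 2 by lra; apply sqrt_le_1_alt; nra).
  pose proof (sqrt_pos K); pose proof (sqrt_pos N); pose proof (sqrt_pos M).
  assert (Hsquare : (Rpower x (2 * alpha) + Rpower y (2 * alpha)) * B ^ 2 <= 2 * K * Q).
  { pose proof (H2a x ltac:(lra)); pose proof (H2a y ltac:(lra)).
    pose proof (Rpower_pos x (2 * alpha)); pose proof (Rpower_pos y (2 * alpha)); nra. }
  assert (Hcross : (Rpower x alpha + Rpower y alpha) * B * sqrt (ua + ub + A)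
                   <= 2 * sqrt (M + 1) * K * Q)
    by (apply cross_error_le; nra).
  assert (Hsqrt : forall v, 0 <= v <= ua + ub -> sqrt v <= sqrt M * K * Q).
  { intros v Hv.
    apply (Rle_trans _ (sqrt K * sqrt M * sqrt N)); [apply sqrt_le_mult3; nra |].
    replace (sqrt M * K * Q) with (K * sqrt M * Q) by ring.
    apply Rmult_le_compat; [nra | lra | apply Rmult_le_compat_r; lra | lra]. }
  pose proof (Hsqrt ua ltac:(lra)); pose proof (Hsqrt ub ltac:(lra)).
  nra.
Qed.

Lemma nat_split_balanced (n : nat) : (2 <= n)%nat ->
  exists a b, (1 <= a)%nat /\ (1 <= b)%nat /\ n = (a + b)%nat /\
              (4 * a <= 3 * n)%nat /\ (4 * b <= 3 * n)%nat.
Proof.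
  intros Hn; destruct (Nat.Even_or_Odd n) as [[k Hk] | [k Hk]].
  - exists k, k; lia.
  - exists k, (k + 1)%nat; lia.
Qed.

Lemma le_INR_mul (p q a n : nat) : (p * a <= q * n)%nat -> INR p * INR a <= INR q * INR n.
Proof. intros H; rewrite <- !mult_INR; apply le_INR, H. Qed.

Section MajorantInduction.

Variables (c alpha A B D : R) (u : nat -> R).
Hypothesis Hc : 0 <= c.
Hypothesis Halpha : 0 < alpha < 1 / 2.
Hypothesis Hu : forall n : nat, (1 <= n)%nat -> 0 <= u n.
Hypothesis HA : 0 <= A.
Hypothesis HB : 0 <= B.
Hypothesis Hhyp : subadd_hyp c A B alpha u.
Hypothesis HD : 0 < D.
Hypothesis HDgap :
  3 + 2 * sqrt (D + 2) + 2 * c * sqrt (D + 1) <= D * (Rpower (3 / 4) (alpha - 1 / 2) - 1).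

Let K := 1 + u 1%nat + A + B ^ 2.
Let majorant (x : R) := (D + 1) * x - D * Rpower x (alpha + 1 / 2).

Lemma u_le_majorant_step (a b : nat) :
  (1 <= a)%nat -> (1 <= b)%nat -> (4 * a <= 3 * (a + b))%nat -> (4 * b <= 3 * (a + b))%nat ->
  u a <= K * majorant (INR a) -> u b <= K * majorant (INR b) ->
  u (a + b)%nat <= K * majorant (INR (a + b)).
Proof.
  intros Ha Hb Ha4 Hb4 IHa IHb.
  pose proof (Hu 1 (le_n 1)) as Hu1.
  assert (HK : 1 <= K) by (unfold K; nra).
  pose proof (Hhyp a b Ha Hb) as Hab.
  pose proof (Hu a Ha) as Hua; pose proof (Hu b Hb) as Hub.
  apply le_INR_mul in Ha4, Hb4; apply le_INR in Ha, Hb.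
  unfold majorant in *; rewrite plus_INR in *; simpl INR in *.
  set (x := INR a) in *; set (y := INR b) in *; set (Q := Rpower (x + y) (alpha + 1 / 2)).
  assert (Hbal : Rpower (3 / 4) (alpha - 1 / 2) * Q
                 <= Rpower x (alpha + 1 / 2) + Rpower y (alpha + 1 / 2)).
  { replace (alpha - 1 / 2) with (alpha + 1 / 2 - 1) by lra.
    apply Rpower_add_balanced; lra. }
  assert (Huab : u a + u b <= K * (D + 1) * (x + y)).
  { assert (Hcorr : forall z, 0 <= K * (D * Rpower z (alpha + 1 / 2))).
    { intros z; apply Rmult_le_pos; [lra | apply Rmult_le_pos; [lra | apply Rlt_le, Rpower_pos]]. }
    pose proof (Hcorr x); pose proof (Hcorr y); nra. }
  assert (HAK : 0 <= A <= K) by (unfold K; nra).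
  assert (HBK : B ^ 2 <= K) by (unfold K; nra).
  assert (Hpert := subadd_error_le c alpha A B K (D + 1) x y (u a) (u b)
                     Hc Halpha Ha Hb Hua Hub ltac:(lra) Huab HAK HB HBK HK).
  fold Q in Hpert; replace (D + 1 + 1) with (D + 2) in Hpert by ring.
  assert (HQ : 0 <= K * Q) by (apply Rmult_le_pos; [lra | apply Rlt_le, Rpower_pos]).
  assert (Hsurplus : K * Q * (3 + 2 * sqrt (D + 2) + 2 * c * sqrt (D + 1))
                     <= K * Q * (D * (Rpower (3 / 4) (alpha - 1 / 2) - 1)))
    by (apply Rmult_le_compat_l; assumption).
  assert (Hgain : K * (D * (Rpower (3 / 4) (alpha - 1 / 2) * Q))
          <= K * (D * (Rpower x (alpha + 1 / 2) + Rpower y (alpha + 1 / 2))))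
    by (apply Rmult_le_compat_l; [lra | apply Rmult_le_compat_l; lra]).
  nra.
Qed.

Lemma u_le_majorant (n : nat) : (1 <= n)%nat -> u n <= K * majorant (INR n).
Proof.
  induction n as [n IH] using lt_wf_ind; intros Hn.
  destruct (Nat.eq_dec n 1) as [-> | Hn1].
  - unfold majorant, K; simpl INR; rewrite Rpower_1_l.
    pose proof (pow2_ge_0 B); lra.
  - destruct (nat_split_balanced n ltac:(lia)) as (a & b & Ha & Hb & -> & Ha4 & Hb4).
    apply u_le_majorant_step; try assumption; apply IH; lia.
Qed.

End MajorantInduction.

Theorem mainTheorem13 :
  forall c alpha : R, 0 < c -> 0 < alpha < 1 / 2 ->
  exists C : R,
    forall (u : nat -> R) (A B : R),
      (forall n : nat, (1 <= n)%nat -> 0 < u n) ->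
      0 < A -> 0 < B ->
      subadd_hyp c A B alpha u ->
      forall n : nat, (1 <= n)%nat ->
        u n <= C * (1 + u 1%nat + A + B ^ 2) * INR n.
Proof.
  intros c alpha Hc Halpha.
  set (gam := Rpower (3 / 4) (alpha - 1 / 2) - 1).
  assert (Hgam : 0 < gam)
    by (pose proof (Rpower_gt_1 (3 / 4) (alpha - 1 / 2) ltac:(lra) ltac:(lra)); unfold gam; lra).
  destruct (linear_dominates_sqrt 3 (2 + 2 * c) gam ltac:(lra) ltac:(lra) Hgam) as (D & HD & Hgap).
  exists (D + 1); intros u A B Hu HA HB Hhyp n Hn.
  assert (HDgap : 3 + 2 * sqrt (D + 2) + 2 * c * sqrt (D + 1) <= D * gam).
  { assert (sqrt (D + 1) <= sqrt (D + 2)) by (apply sqrt_le_1_alt; lra). nra. }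
  pose proof (u_le_majorant c alpha A B D u ltac:(lra) Halpha
                ltac:(intros m Hm; apply Rlt_le, Hu, Hm) ltac:(lra) ltac:(lra) Hhyp HD HDgap n Hn).
  pose proof (Rpower_pos (INR n) (alpha + 1 / 2)); pose proof (pos_INR n).
  pose proof (Hu 1%nat (le_n 1)).
  assert (Hcorr : 0 <= (1 + u 1%nat + A + B ^ 2) * (D * Rpower (INR n) (alpha + 1 / 2)))
    by (apply Rmult_le_pos; nra).
  nra.
Qed.
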